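(* Let $\mathcal A$ be a class of spaces and let $X$ be an absolute extensor for all $Z\in\mathcal A$. If $X$ has a binary normal closed subbase $\mathcal S$, then every $\mathcal S$-convex $\mathcal S$-open continuous surjection $f\colon X\to Y$ is $\mathcal A$-soft.
   Context: All spaces are Tychonoff and maps continuous. $X$ is an absolute extensor for $Z$ if every continuous map from a closed subset of $Z$ to $X$ extends to a continuous map $Z\to X$. A map $f\colon X\to Y$ is $\mathcal A$-soft if for any $Z\in\mathcal A$, closed $A\subset Z$ and continuous maps $k\colon Z\to Y$, $h\colon A\to X$ with $f\circ h=k|A$, there is a continuous $g\colon Z\to X$ extending $h$ with $f\circ g=k$. A family $\mathcal S$ of closed subsets of $X$ is a closed subbase if every closed set is an intersection of finite unions of members of $\mathcal S$. A family is linked if any two members intersect; $\mathcal S$ is binary if every linked subfamily has nonempty intersection. $\mathcal S$ is normal if for every disjoint $S_0,S_1\in\mathcal S$ there exist $T_0,T_1\in\mathcal S$ with $S_0\cap T_1=\varnothing=T_0\cap S_1$ and $T_0\cup T_1=X$. For $B\subset X$, $I_{\mathcal S}(B)=\bigcap\{S\in\mathcal S:B\subset S\}$; $B$ is $\mathcal S$-convex if $I_{\mathcal S}(\{x,y\})\subset B$ for all $x,y\in B$. A map $f$ is $\mathcal S$-convex if its fibers are $\mathcal S$-convex, and $\mathcal S$-open if $f(X\setminus S)$ is open for every $S\in\mathcal S$. *)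

From HB Require Import structures.
From mathcomp Require Import all_boot all_order all_algebra.
From mathcomp Require Import all_classical all_reals all_analysis.
From mathcomp Require Import Rstruct Rstruct_topology.
Set Implicit Arguments. Unset Strict Implicit. Unset Printing Implicit Defensive.
Import Order.TTheory GRing.Theory Num.Theory.
Local Open Scope classical_set_scope.

(* Tychonoff = completely regular (library notion, with the reals as scalars) + Hausdorff *)
Definition tychonoff_space (T : topologicalType) : Prop :=
  completely_regular_space T /\ hausdorff_space T.

(* A map A -> X is represented
   by a function h : Z -> X continuous on A (only its values on A matter). *)
Definition absolute_extensor_for (X Z : topologicalType) : Prop :=
  forall (A : set Z) (h : Z -> X), closed A -> {within A, continuous h} ->
  exists g : Z -> X, continuous g /\ {in A, g =1 h}.

Definition soft_wrt (cA : topologicalType -> Prop)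
    (X Y : topologicalType) (f : X -> Y) : Prop :=
  forall (Z : topologicalType), cA Z ->
  forall (A : set Z) (k : Z -> Y) (h : Z -> X),
    closed A -> continuous k -> {within A, continuous h} ->
    (forall z, A z -> f (h z) = k z) ->
    exists g : Z -> X, continuous g /\ {in A, g =1 h} /\ (forall z, f (g z) = k z).

Definition finite_union_of {X : Type} (S : set (set X)) (B : set X) : Prop :=
  exists F : set (set X), finite_set F /\ F `<=` S /\ B = \bigcup_(U in F) U.

Definition closed_subbase {X : topologicalType} (S : set (set X)) : Prop :=
  (forall U, S U -> closed U) /\
  forall C : set X, closed C ->
    exists G : set (set X), G `<=` finite_union_of S /\ C = \bigcap_(B in G) B.

Definition linked {X : Type} (L : set (set X)) : Prop :=
  forall U V, L U -> L V -> U `&` V !=set0.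

Definition binary {X : Type} (S : set (set X)) : Prop :=
  forall L, L `<=` S -> linked L -> \bigcap_(U in L) U !=set0.

Definition normal_family {X : Type} (S : set (set X)) : Prop :=
  forall S0 S1, S S0 -> S S1 -> S0 `&` S1 = set0 ->
  exists T0 T1, S T0 /\ S T1 /\ S0 `&` T1 = set0 /\ T0 `&` S1 = set0 /\
    T0 `|` T1 = setT.

Definition I_S {X : Type} (S : set (set X)) (B : set X) : set X :=
  \bigcap_(U in [set U | S U /\ B `<=` U]) U.

Definition S_convex {X : Type} (S : set (set X)) (B : set X) : Prop :=
  forall x y, B x -> B y -> I_S S [set x; y] `<=` B.

Definition S_convex_map {X Y : Type} (S : set (set X)) (f : X -> Y) : Prop :=
  forall y : Y, S_convex S (f @^-1` [set y]).

Definition S_open_map {X Y : topologicalType} (S : set (set X)) (f : X -> Y) : Prop :=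
  forall U, S U -> open (f @` (~` U)).

From mathcomp Require Import all_boot all_classical all_reals all_analysis.
Local Open Scope classical_set_scope.

(* For x in X and y in Y, the members of S that either contain x and meet the
   fibre f^-1(y), or contain the whole fibre, form a linked family
   [fiber_family S f x y]; its meet [fiber_gate S f x y] is a single point
   r(x, y) of the fibre, the point of f^-1(y) "closest" to x.  Binarity makes
   the meet nonempty, normality and T1 make it a singleton, and a Helly-type
   property of S-convex sets puts it in the (S-convex, closed) fibre.  Since a
   binary closed subbase makes X compact, S-openness of f makes
   (x, y) |-> r(x, y) continuous, and r(x, f x) = x.  If h : A -> X lies over
   k : Z -> Y, extend h to g0 : Z -> X and take g z = r(g0 z, k z). *)

Lemma filter_forall_seq (T : Type) (F : set_system T) (A : eqType)
    (P : A -> set T) (s : seq A) :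
  Filter F -> (forall a, a \in s -> F (P a)) ->
  F [set t | forall a, a \in s -> P a t].
Proof.
move=> FF; elim: s => [|a s IHs] Fs.
  by apply: filterS filterT => t _ a; rewrite in_nil.
have Fa : F (P a) by apply: Fs; rewrite mem_head.
have /IHs Fall : forall b, b \in s -> F (P b).
  by move=> b bs; apply: Fs; rewrite in_cons bs orbT.
apply: filterS (filterI Fa Fall) => t [Pat Pst] b.
by rewrite in_cons => /predU1P[->|/Pst].
Qed.

Lemma ultra_cover_seq {T : Type} {F : set_system T} {B : set T} {s : seq (set T)} :
  UltraFilter F -> F B -> B `<=` \bigcup_(U in [set` s]) U ->
  exists2 U, U \in s & F U.
Proof.
move=> FU; elim: s B => [|U s IHs] B FB Bs.
  by have [z /Bs[V]] := filter_ex FB; rewrite /= in_nil.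
have [FU'|FnU] := in_ultra_setVsetC U FU; first by exists U; rewrite ?mem_head.
have [|V Vs FV] := IHs (B `&` ~` U) (filterI FB FnU).
  move=> z [/Bs[V]]; rewrite /= in_cons => /predU1P[->//|Vs] Vz _.
  by exists V.
by exists V; rewrite // in_cons Vs orbT.
Qed.

Lemma binary_convex_meet {X : Type} {S : set (set X)} {C : set X} {x : X}
    {s : seq (set X)} :
  binary S -> S_convex S C -> C !=set0 ->
  (forall U, U \in s -> [/\ S U, U x & U `&` C !=set0]) ->
  exists2 c, C c & forall U, U \in s -> U c.
Proof.
move=> Sbin Sconv [c0 Cc0]; elim: s => [|U s IHs] sP.
  by exists c0 => // U; rewrite in_nil.
have [|d Cd sd] := IHs.
  by move=> V Vs; apply: sP; rewrite in_cons Vs orbT.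
have [SU Ux [c [Uc Cc]]] := sP U (mem_head _ _).
pose M := [set V | V \in U :: s \/ [/\ S V, V d & V c]].
have MS : M `<=` S by move=> V [/sP[]|[]].
have Mdc V : V \in U :: s -> V c \/ V d.
  by rewrite in_cons => /predU1P[->|/sd]; [left|right].
have Mlinked : linked M.
  move=> V W [Vs|[_ Vd Vc]] [Ws|[_ Wd Wc]].
  - by exists x; split; have [] := sP _ Vs; have [] := sP _ Ws.
  - by case: (Mdc V Vs) => ?; [exists c|exists d].
  - by case: (Mdc W Ws) => ?; [exists c|exists d].
  - by exists d.
(* The meet of [M] lies in [I_S S [set d; c]], which is inside [C]. *)
have [r Mr] := Sbin M MS Mlinked.
exists r; last by move=> V Vs; apply: Mr; left.
apply: (Sconv d c Cd Cc) => V [SV dcV]; apply: Mr; right.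
by split => //; apply: dcV; [left|right].
Qed.

Section FiberFamily.
Context {X Y : Type} (S : set (set X)) (f : X -> Y).

Definition fiber_family (x : X) (y : Y) : set (set X) :=
  [set U | S U /\ ((U x /\ U `&` (f @^-1` [set y]) !=set0) \/ f @^-1` [set y] `<=` U)].

Definition fiber_gate (x : X) (y : Y) : set X := \bigcap_(U in fiber_family x y) U.

Lemma fiber_familyS x y : fiber_family x y `<=` S.
Proof. by move=> U []. Qed.

Lemma fiber_family_linked x y : (exists z, f z = y) -> linked (fiber_family x y).
Proof.
move=> [z fz] U V [_ [[Ux [u [Uu fu]]]|fU]] [_ [[Vx [v [Vv fv]]]|fV]].
- by exists x.
- by exists u; split => //; apply: fV.
- by exists v; split => //; apply: fU.
- by exists z; split; [apply: fU|apply: fV].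
Qed.

Lemma fiber_family_cover x y {A B : set X} : S A -> S B -> A `|` B = setT ->
  fiber_family x y A \/ fiber_family x y B.
Proof.
wlog Ax : A B / A x => [wl SA SB AB|SA SB AB].
  have : (A `|` B) x by rewrite AB.
  case=> [Ax|Bx]; first exact: wl.
  by rewrite or_comm; apply: wl => //; rewrite setUC.
have [AC|AC] := pselect (A `&` (f @^-1` [set y]) !=set0).
  by left; split => //; left.
right; split => //; right => z fz; have : (A `|` B) z by rewrite AB.
by case=> // Az; exfalso; apply: AC; exists z.
Qed.

Lemma fiber_gate_self x : fiber_gate x (f x) x.
Proof. by move=> U [_ [[]|fU]] //; apply: fU. Qed.

End FiberFamily.

Section ClosedSubbase.
Context {X : topologicalType} {S : set (set X)}.
Hypothesis Ssub : closed_subbase S.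

Lemma closed_subbase_cover {C : set X} {p : X} : closed C -> ~ C p ->
  exists s : seq (set X), C `<=` \bigcup_(U in [set` s]) U /\
    forall U, U \in s -> [/\ S U, ~ U p & U `&` C !=set0].
Proof.
move=> Ccl nCp; have [G [GS CE]] := Ssub.2 C Ccl.
have /existsNP[B /not_implyP[GB nBp]] : ~ (\bigcap_(B in G) B) p by rewrite -CE.
have [F [/finite_seqP[s0 Fs0] [FS BE]]] := GS B GB.
rewrite {}Fs0 in FS BE.
exists [seq U <- s0 | `[< U `&` C !=set0 >]]; split.
  move=> c Cc; have : B c by move: Cc; rewrite CE; apply.
  rewrite BE => -[U s0U Uc]; exists U => //=.
  by rewrite mem_filter s0U andbT; apply/asboolP; exists c.
move=> U; rewrite mem_filter => /andP[/asboolP UC s0U]; split => //.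
  exact: FS.
by move=> Up; apply: nBp; rewrite BE; exists U.
Qed.

Hypothesis Xacc : accessible_space X.

Lemma closed_subbase_separates {p q : X} : p != q -> exists U, [/\ S U, U p & ~ U q].
Proof.
move=> pq; have qp : ~ [set p] q by move=> /= qp; rewrite qp eqxx in pq.
have [s [ps sP]] := closed_subbase_cover (@accessible_closed_set1 X Xacc p) qp.
have [U Us Up] := ps p erefl; have [SU nUq _] := sP U Us.
by exists U.
Qed.

Hypotheses (Sbin : binary S) (Snorm : normal_family S).

Lemma subbase_disjoint_member {U : set X} {p : X} : S U -> ~ U p ->
  exists T, [/\ S T, T p & T `&` U = set0].
Proof.
(* An empty [U] has to be treated apart: [L] below would not be linked. *)
move=> SU nUp; have [U0|/set0P[u Uu]] := eqVneq U set0.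
  rewrite {}U0 in SU *.
  have [T0 [T1 [ST0 [ST1 [_ [_ T01]]]]]] := Snorm set0 set0 SU SU (setI0 set0).
  have : (T0 `|` T1) p by rewrite T01.
  by case=> Tp; [exists T0|exists T1]; rewrite setI0.
apply: contrapT => noT.
have meetU V : S V -> V p -> V `&` U !=set0.
  by move=> SV Vp; apply/set0P/eqP => VU; apply: noT; exists V.
pose L := [set V | S V /\ (V p \/ V = U)].
have Llinked : linked L.
  move=> V W [SV [Vp|->]] [SW [Wp|->]].
  - by exists p.
  - exact: meetU.
  - by rewrite setIC; apply: meetU.
  - by exists u.
have [q Lq] := Sbin L (fun _ => @proj1 _ _) Llinked.
have pq : p != q.
  by apply/eqP => pq; apply: nUp; rewrite pq; apply: Lq; split => //; right.
have [V [SV Vp nVq]] := closed_subbase_separates pq.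
by apply: nVq; apply: Lq; split => //; left.
Qed.

Lemma subbase_separating_cover {U : set X} {p : X} : S U -> ~ U p ->
  exists P0 P1, [/\ S P0, S P1, ~ P1 p, P0 `&` U = set0 & P0 `|` P1 = setT].
Proof.
move=> SU nUp; have [T [ST Tp TU]] := subbase_disjoint_member SU nUp.
have [P0 [P1 [SP0 [SP1 [TP1 [P0U P01]]]]]] := Snorm T U ST SU TU.
exists P0, P1; split => // P1p.
by have : (T `&` P1) p by []; rewrite TP1.
Qed.

Lemma compact_binary_subbase : compact [set: X].
Proof.
rewrite compact_ultra => F FU _.
pose L := [set U | S U /\ F U].
have Llinked : linked L.
  by move=> U V [_ FU'] [_ FV]; exact: filter_ex (filterI FU' FV).
have [p Lp] := Sbin L (fun _ => @proj1 _ _) Llinked.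
exists p; split => // W; rewrite nbhsE; move=> [V [Vopen Vp] VW].
apply: contrapT => nFW.
have [s [nVs sP]] := closed_subbase_cover (open_closedC Vopen) (fun nVp => nVp Vp).
have FnW : F (~` W) by case: (in_ultra_setVsetC W FU).
have nWs : ~` W `<=` \bigcup_(U in [set` s]) U.
  by move=> z nWz; apply: nVs => Vz; apply: nWz; apply: VW.
have [U Us FU'] := ultra_cover_seq FU FnW nWs.
have [SU nUp _] := sP U Us.
by apply: nUp; apply: Lp.
Qed.

Section FiberGate.
Context {Y : topologicalType} {f : X -> Y}.

Lemma fiber_gate_uniq {x y} {p q : X} :
  fiber_gate S f x y p -> fiber_gate S f x y q -> p = q.
Proof.
move=> gp gq; have [//|pq] := eqVneq p q; exfalso.
have [V [SV Vp nVq]] := closed_subbase_separates pq.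
have [P0 [P1 [SP0 SP1 nP1q P0V P01]]] := subbase_separating_cover SV nVq.
have [/gp P0p|/gq //] := fiber_family_cover S f x y SP0 SP1 P01.
by have : (P0 `&` V) p by []; rewrite P0V.
Qed.

Hypotheses (fcont : continuous f) (Yacc : accessible_space Y) (fconv : S_convex_map S f).

Lemma fiber_gate_disjoint_member {x y} {p : X} {U : set X} : fiber_gate S f x y p ->
  S U -> ~ U p -> U `&` (f @^-1` [set y]) !=set0 ->
  exists Q, [/\ S Q, Q x, Q `&` (f @^-1` [set y]) !=set0 & Q `&` U = set0].
Proof.
move=> gp SU nUp [c0 [Uc0 fc0]].
have [P0 [P1 [SP0 SP1 nP1p P0U P01]]] := subbase_separating_cover SU nUp.
have cover z : P0 z \/ P1 z by have : (P0 `|` P1) z by rewrite P01.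
have nLP1 : ~ fiber_family S f x y P1 by move=> LP1; apply: nP1p; apply: gp.
have UP1 : U `<=` P1.
  move=> z Uz; case: (cover z) => // P0z.
  by have : (P0 `&` U) z by []; rewrite P0U.
exists P0; split => //.
  case: (cover x) => // P1x; exfalso; apply: nLP1; split => //; left.
  by split => //; exists c0; split => //; apply: UP1.
have /existsNP[c /not_implyP[fc nP1c]] : ~ (f @^-1` [set y] `<=` P1).
  by move=> fP1; apply: nLP1; split => //; right.
by exists c; split => //; case: (cover c).
Qed.

Lemma fiber_gate_in_fiber {x y} {p : X} : (exists z, f z = y) ->
  fiber_gate S f x y p -> f p = y.
Proof.
move=> [z fz] gp; apply: contrapT => fpy.
have fiber_closed : closed (f @^-1` [set y]).
  exact: (continuous_closedP f).1 fcont _ (@accessible_closed_set1 Y Yacc y).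
have [s [fs sP]] := closed_subbase_cover fiber_closed fpy.
have /choice[Q QP] : forall U, exists Q, U \in s ->
    [/\ S Q, Q x, Q `&` (f @^-1` [set y]) !=set0 & Q `&` U = set0].
  move=> U; have [Us|_] := boolP (U \in s); last by exists set0.
  have [SU nUp UC] := sP U Us.
  by have [Q ?] := fiber_gate_disjoint_member gp SU nUp UC; exists Q.
(* A fibre point lying in every [Q U] lies in no [U], yet the [U] cover the fibre. *)
have [c fc Qc] : exists2 c, f c = y & forall V, V \in map Q s -> V c.
  apply: (binary_convex_meet (x := x) Sbin (fconv y)); first by exists z.
  by move=> V /mapP[U Us ->]; have [SQ Qx QC _] := QP U Us.
have [U Us Uc] := fs c fc; have [_ _ _ QU] := QP U Us.
suff : (Q U `&` U) c by rewrite QU.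
by split => //; apply: Qc; apply: map_f.
Qed.

Lemma exists_fiber_retraction : (forall y, exists x, f x = y) ->
  exists r : X -> Y -> X, forall x y, f (r x y) = y /\ fiber_gate S f x y (r x y).
Proof.
move=> fsurj.
have /choice[r rP] : forall xy : X * Y, exists p, fiber_gate S f xy.1 xy.2 p.
  move=> [x y].
  have [p gp] := Sbin _ (fiber_familyS S f x y) (fiber_family_linked S f x y (fsurj y)).
  by exists p.
exists (fun x y => r (x, y)) => x y; split; last exact: rP (x, y).
exact: fiber_gate_in_fiber (fsurj y) (rP (x, y)).
Qed.

Hypotheses (Yhaus : hausdorff_space Y) (fopen : S_open_map S f).

Lemma fiber_family_near {T : Type} {F : set_system T} {FF : Filter F}
    {u : T -> X} {v : T -> Y} {x y} {P0 P1 : set X} :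
  u @ F --> x -> v @ F --> y -> S P0 -> S P1 -> P0 `|` P1 = setT ->
  ~ fiber_family S f x y P1 -> \forall t \near F, fiber_family S f (u t) (v t) P0.
Proof.
move=> ux vy SP0 SP1 P01 nLP1.
have cover z : P0 z \/ P1 z by have : (P0 `|` P1) z by rewrite P01.
have P1closed : closed P1 := Ssub.1 P1 SP1.
have [P1x|nP1x] := pselect (P1 x).
  have nfP1y : ~ (f @` P1) y.
    by move=> [w P1w fw]; apply: nLP1; split => //; left; split => //; exists w.
  have fP1closed : closed (f @` P1).
    apply: (compact_closed Yhaus); apply: continuous_compact.
      exact: continuous_subspaceT.
    exact: subclosed_compact P1closed compact_binary_subbase _.
  have : \forall t \near F, ~ (f @` P1) (v t).
    apply: (vy (~` (f @` P1))); apply: open_nbhs_nbhs; split => //.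
    exact: closed_openC.
  apply: filterS => t nfP1v; split => //; right => w /= fw.
  by case: (cover w) => // P1w; exfalso; apply: nfP1v; exists w.
have /existsNP[c /not_implyP[fc nP1c]] : ~ (f @^-1` [set y] `<=` P1).
  by move=> fP1; apply: nLP1; split => //; right.
have u_notin : \forall t \near F, ~ P1 (u t).
  apply: (ux (~` P1)); apply: open_nbhs_nbhs; split => //.
  exact: closed_openC.
have v_in : \forall t \near F, (f @` (~` P1)) (v t).
  apply: (vy (f @` (~` P1))); apply: open_nbhs_nbhs; split; first exact: fopen.
  by exists c.
apply: filterS (filterI u_notin v_in) => t [nP1u [w nP1w fw]].
split => //; left; split; first by case: (cover (u t)).
by exists w; split => //; case: (cover w).
Qed.

Lemma fiber_retraction_cvg {r : X -> Y -> X} {T : Type} {F : set_system T}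
    {FF : Filter F} {u : T -> X} {v : T -> Y} {x y} :
  (forall x y, fiber_gate S f x y (r x y)) -> u @ F --> x -> v @ F --> y ->
  (fun t => r (u t) (v t)) @ F --> r x y.
Proof.
move=> rgate ux vy W; rewrite nbhsE; move=> [V [Vopen Vr] VW].
have [s [nVs sP]] := closed_subbase_cover (open_closedC Vopen) (fun nVr => nVr Vr).
have : \forall t \near F, forall U, U \in s -> ~ U (r (u t) (v t)).
  apply: filter_forall_seq => U Us; have [SU nUr _] := sP U Us.
  have [P0 [P1 [SP0 SP1 nP1r P0U P01]]] := subbase_separating_cover SU nUr.
  have nLP1 : ~ fiber_family S f x y P1 by move=> LP1; apply: nP1r; apply: rgate.
  apply: filterS (fiber_family_near ux vy SP0 SP1 P01 nLP1) => t LP0 Ur.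
  suff : (P0 `&` U) (r (u t) (v t)) by rewrite P0U.
  by split => //; apply: rgate.
apply: filterS => t nUr; apply: VW; apply: contrapT => nVr.
by have [U Us Ur] := nVs _ nVr; apply: (nUr U).
Qed.

End FiberGate.

End ClosedSubbase.

Theorem corollary1p4
  (cA : topologicalType -> Prop)
  (cA_tych : forall Z, cA Z -> tychonoff_space Z)
  (X Y : topologicalType) (tychX : tychonoff_space X) (tychY : tychonoff_space Y)
  (AE : forall Z, cA Z -> absolute_extensor_for X Z)
  (S : set (set X)) (Ssub : closed_subbase S) (Sbin : binary S)
  (Snorm : normal_family S)
  (f : X -> Y) (fcont : continuous f) (fsurj : forall y, exists x, f x = y)
  (fconv : S_convex_map S f) (fopen : S_open_map S f) :
  soft_wrt cA f.
Proof.
move=> Z cAZ A k h Aclosed kcont hcont fhk.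
have Xacc := hausdorff_accessible tychX.2.
have [g0 [g0cont g0h]] := AE Z cAZ A h Aclosed hcont.
have [r rP] := exists_fiber_retraction Ssub Xacc Sbin Snorm fcont
  (hausdorff_accessible tychY.2) fconv fsurj.
have rgate x y : fiber_gate S f x y (r x y) by have [] := rP x y.
exists (fun z => r (g0 z) (k z)); split; [|split].
- move=> z; exact: (fiber_retraction_cvg Ssub Xacc Sbin Snorm fcont tychY.2 fopen
    rgate (g0cont z) (kcont z)).
- move=> z Az; rewrite g0h //.
  apply: (fiber_gate_uniq Ssub Xacc Sbin Snorm (rgate _ _)).
  by rewrite -fhk; [apply: fiber_gate_self | rewrite -in_setE].
- by move=> z; have [] := rP (g0 z) (k z).
Qed.
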